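(* Let $F$ be an infinite field of characteristic different from $2$, and let $\mathbb{O}=(((F,\alpha),\beta),\gamma)$ be the octonion (Cayley–Dickson) algebra, with its $\mathbb{Z}_2^3$-grading coming from the Cayley–Dickson process. Then the $T_{\mathbb{Z}_2^3}$-ideal $T_{\mathbb{Z}_2^3}(\mathbb{O})$ of $\mathbb{Z}_2^3$-graded polynomial identities of $\mathbb{O}$ is generated, as a graded $T$-ideal, by the following identities (for distinct variables $x_1,x_2,x_3$ whose degrees satisfy the stated conditions): \begin{align*} [x_1,x_2]=0, &\quad |\langle g(x_1),g(x_2)\rangle|\le 2;\\ x_1\circ x_2=0, &\quad |\langle g(x_1),g(x_2)\rangle|\ge 4;\\ (x_1,x_2,x_3)=0, &\quad |\langle g(x_1),g(x_2),g(x_3)\rangle|\le 4;\\ (x_1x_2)x_3+x_1(x_2x_3)=0, &\quad \langle g(x_1),g(x_2),g(x_3)\rangle=\mathbb{Z}_2^3. \end{align*}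
   Context: Cayley–Dickson process: if $A$ is a unital algebra over a commutative ring with an involution $a\mapsto\bar a$ and $\alpha\neq 0$ a scalar, $(A,\alpha)=A\oplus A$ with product $(a_1,a_2)(a_3,a_4)=(a_1a_3+\alpha a_4\bar a_2,\ \bar a_1a_4+a_3a_2)$ and involution $\overline{(a_1,a_2)}=(\bar a_1,-a_2)$. If $A$ is $G$-graded, $(A,\alpha)$ is $G\times\mathbb{Z}_2$-graded by $(A,\alpha)_{(h,0)}=A_h\oplus 0$, $(A,\alpha)_{(h,1)}=0\oplus A_h$. Here $F$ is given the trivial involution and trivial grading, and $\alpha,\beta,\gamma\in F$ are nonzero, so $\mathbb{O}$ is $\mathbb{Z}_2^3$-graded; groups $\mathbb{Z}_2^k$ are written additively. Graded identities: $F_G\{X\}$ is the free nonassociative algebra on variables $x_i^a$ ($i\in\mathbb{N}$, $a\in G$), graded by declaring $g(x_i^a)=a$ and $g(uv)=g(u)g(v)$ for monomials. A polynomial $f(x_1,\dots,x_n)$ is a graded identity of a $G$-graded algebra $A$ if $f(a_1,\dots,a_n)=0$ for all $a_i\in A_{g(x_i)}$; $T_G(A)$ is the set of all of them. A graded $T$-ideal is an ideal of $F_G\{X\}$ invariant under all graded endomorphisms (those sending each variable to an element of the same degree); ''generated'' means the smallest such ideal containing the given polynomials. $[x,y]=xy-yx$, $x\circ y=xy+yx$, $(x,y,z)=(xy)z-x(yz)$; $\langle\cdot\rangle$ is the subgroup generated. *)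

From HB Require Import structures.
From mathcomp Require Import all_boot all_algebra.
Set Implicit Arguments. Unset Strict Implicit. Unset Printing Implicit Defensive.
Import GRing.Theory.
Local Open Scope ring_scope.

Definition G := (bool * bool * bool)%type.

Definition subgroup_closed (H : {set G}) : bool :=
  (0 \in H) && [forall x in H, forall y in H, (x - y) \in H].
Definition gen (A : {set G}) : {set G} :=
  \bigcap_(H : {set G} | subgroup_closed H && (A \subset H)) H.

Section CD.
Variables (F : fieldType) (A : zmodType).
Variables (sc : F -> A -> A) (mul : A -> A -> A) (cj : A -> A) (al : F).
Definition cd_mul (x y : A * A) : A * A :=
  (mul x.1 y.1 + sc al (mul y.2 (cj x.2)), mul (cj x.1) y.2 + mul y.1 x.2).
Definition cd_cj (x : A * A) : A * A := (cj x.1, - x.2).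
Definition cd_sc (c : F) (x : A * A) : A * A := (sc c x.1, sc c x.2).
Definition cd_hom (H : Type) (hom : H -> A -> bool) (g : H * bool) (x : A * A) : bool :=
  if g.2 then (x.1 == 0) && hom g.1 x.2 else hom g.1 x.1 && (x.2 == 0).
End CD.

Section Octonions.
Variables (F : fieldType) (al be ga : F).
Definition sc0 (c : F) (x : F) : F := c * x.
Definition mul0 (x y : F) : F := x * y.
Definition cj0 (x : F) : F := x.
Definition hom0 (_ : unit) (_ : F) : bool := true.

Definition A1 := (F * F)%type.
Definition sc1 := cd_sc sc0.
Definition mul1 : A1 -> A1 -> A1 := cd_mul sc0 mul0 cj0 al.
Definition cj1 : A1 -> A1 := cd_cj cj0.
Definition hom1 := cd_hom hom0.

Definition A2 := (A1 * A1)%type.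
Definition sc2 := cd_sc sc1.
Definition mul2 : A2 -> A2 -> A2 := cd_mul sc1 mul1 cj1 be.
Definition cj2 : A2 -> A2 := cd_cj cj1.
Definition hom2 := cd_hom hom1.

Definition Oct := (A2 * A2)%type.
Definition scO := cd_sc sc2.
Definition mulO : Oct -> Oct -> Oct := cd_mul sc2 mul2 cj2 ga.
Definition homO' := cd_hom hom2.
(* grading group ((1 x Z2) x Z2) x Z2 identified with G = Z2^3 *)
Definition homO (g : G) (x : Oct) : bool :=
  homO' (((tt, g.1.1), g.1.2), g.2) x.
End Octonions.

(* variables x_i^a, i : nat, a : G.  Polynomials are represented by terms;
   two terms denote the same element of F_G{X} iff they have the same
   coefficient on every nonassociative monomial. *)
Inductive term (F : Type) : Type :=
| TVar of nat & G
| TZero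
| TAdd of term F & term F
| TScale of F & term F
| TMul of term F & term F.
Arguments TVar {F}. Arguments TZero {F}.

Inductive mono : Type :=
| MVar of nat & G
| MMul of mono & mono.

Fixpoint mdeg (m : mono) : G :=
  match m with MVar _ a => a | MMul m1 m2 => mdeg m1 + mdeg m2 end.

Section Free.
Variable F : fieldType.

Fixpoint coef (p : term F) (m : mono) : F :=
  match p with
  | TVar i a => if m is MVar j b then ((i == j) && (a == b))%:R else 0
  | TZero => 0
  | TAdd p q => coef p m + coef q m
  | TScale c p => c * coef p m
  | TMul p q => if m is MMul m1 m2 then coef p m1 * coef q m2 else 0
  end.

Definition peq (p q : term F) : Prop := forall m, coef p m = coef q m.

Definition homog (a : G) (p : term F) : Prop := forall m, coef p m != 0 -> mdeg m = a.

Fixpoint subst (s : nat -> G -> term F) (p : term F) : term F :=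
  match p with
  | TVar i a => s i a
  | TZero => TZero
  | TAdd p q => TAdd (subst s p) (subst s q)
  | TScale c p => TScale c (subst s p)
  | TMul p q => TMul (subst s p) (subst s q)
  end.

Definition graded_endo (s : nat -> G -> term F) : Prop := forall i a, homog a (s i a).

Definition TClosed (I : term F -> Prop) : Prop :=
  [/\ (forall p q, peq p q -> I p -> I q) /\ I TZero,
      (forall p q, I p -> I q -> I (TAdd p q)),
      (forall c p, I p -> I (TScale c p)),
      (forall p q, I p -> I (TMul p q)) /\ (forall p q, I q -> I (TMul p q))
    & (forall s, graded_endo s -> forall p, I p -> I (subst s p))].

Definition TGen (S : term F -> Prop) (f : term F) : Prop :=
  forall I, TClosed I -> (forall p, S p -> I p) -> I f.

Definition tcomm (p q : term F) := TAdd (TMul p q) (TScale (-1) (TMul q p)).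
Definition tjord (p q : term F) := TAdd (TMul p q) (TMul q p).
Definition tassoc (p q r : term F) :=
  TAdd (TMul (TMul p q) r) (TScale (-1) (TMul p (TMul q r))).
Definition tantiassoc (p q r : term F) := TAdd (TMul (TMul p q) r) (TMul p (TMul q r)).

Definition oct_gens (f : term F) : Prop :=
  (exists i j a b, (i, a) <> (j, b) /\ #|gen [set a; b]| <= 2 /\
     f = tcomm (TVar i a) (TVar j b))%N
  \/ (exists i j a b, (i, a) <> (j, b) /\ 4 <= #|gen [set a; b]| /\
     f = tjord (TVar i a) (TVar j b))%N
  \/ (exists i j k a b c, [/\ (i, a) <> (j, b), (i, a) <> (k, c), (j, b) <> (k, c),
       #|gen [set a; b; c]| <= 4 & f = tassoc (TVar i a) (TVar j b) (TVar k c)])%N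
  \/ (exists i j k a b c, [/\ (i, a) <> (j, b), (i, a) <> (k, c), (j, b) <> (k, c),
       gen [set a; b; c] = [set: G] & f = tantiassoc (TVar i a) (TVar j b) (TVar k c)]).

Variables (al be ga : F).
Fixpoint evalO (v : nat -> G -> Oct F) (p : term F) : Oct F :=
  match p with
  | TVar i a => v i a
  | TZero => 0
  | TAdd p q => evalO v p + evalO v q
  | TScale c p => scO c (evalO v p)
  | TMul p q => mulO al be ga (evalO v p) (evalO v q)
  end.

Definition graded_identity_O (f : term F) : Prop :=
  forall v : nat -> G -> Oct F, (forall i a, homO a (v i a)) -> evalO v f = 0.
End Free.

(* The Cayley-Dickson process preserves the following structure: a basis [e_h]
   indexed by a commutative grading monoid with [e_h e_k = sigma h k e_(h+k)] for
   nonzero scalars [sigma h k].  Hence every homogeneous component of the octonions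
   is one-dimensional, and a nonassociative monomial evaluated at homogeneous
   elements [s_i e_(a_i)] is the product of the [s_i], times a nonzero product of
   structure constants, times the basis element of its degree.  Whether two or
   three basis elements commute or anticommute, associate or antiassociate, depends
   only on whether their degrees are linearly dependent over Z_2, i.e. on the order
   of the subgroup they generate; so the listed polynomials are graded identities.
   Conversely, the generators let one commute and reassociate any monomial up to a
   nonzero scalar, so modulo the T-ideal they generate every polynomial is a linear
   combination of normal monomials (right-normed, with sorted variables).
   Evaluating such a combination at [s_i e_(a_i)] gives a polynomial function of
   the [s_i] in which distinct normal monomials have distinct multisets of
   variables; as [F] is infinite, a graded identity in normal form is zero. *)

From HB Require Import structures.
From mathcomp Require Import all_boot all_algebra ring zify.

Set Implicit Arguments.
Import GRing.Theory.
Local Open Scope ring_scope.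

(** * Twisted algebras and the Cayley-Dickson process *)

(* An algebra with an involution and a basis [e_h] indexed by a commutative
   grading monoid, such that [e_h e_k = sigma h k e_(h + k)] and
   [conj e_h = eps h e_h] with nonzero scalars [sigma] and [eps]; here
   [emb h s = s e_h], [proj h] is the [e_h]-coordinate and [hom h] the
   homogeneous elements of degree [h]. *)
Record twisted_alg (F : fieldType) := TwistedAlg {
  ta_A : zmodType;
  ta_scale : F -> ta_A -> ta_A;
  ta_mul : ta_A -> ta_A -> ta_A;
  ta_conj : ta_A -> ta_A;
  ta_grade : eqType;
  ta_hom : ta_grade -> ta_A -> bool;
  ta_gadd : ta_grade -> ta_grade -> ta_grade;
  ta_emb : ta_grade -> F -> ta_A;
  ta_proj : ta_grade -> ta_A -> F;
  ta_sigma : ta_grade -> ta_grade -> F;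
  ta_eps : ta_grade -> F;
  ta_scaleDr : forall c x y, ta_scale c (x + y) = ta_scale c x + ta_scale c y;
  ta_scaleDl : forall c d x, ta_scale (c + d) x = ta_scale c x + ta_scale d x;
  ta_scaleA : forall c d x, ta_scale c (ta_scale d x) = ta_scale (c * d) x;
  ta_scale1 : forall x, ta_scale 1 x = x;
  ta_mulDl : forall x y z, ta_mul (x + y) z = ta_mul x z + ta_mul y z;
  ta_mulDr : forall x y z, ta_mul x (y + z) = ta_mul x y + ta_mul x z;
  ta_mulZl : forall c x y, ta_mul (ta_scale c x) y = ta_scale c (ta_mul x y);
  ta_mulZr : forall c x y, ta_mul x (ta_scale c y) = ta_scale c (ta_mul x y);
  ta_conjD : forall x y, ta_conj (x + y) = ta_conj x + ta_conj y;
  ta_conjZ : forall c x, ta_conj (ta_scale c x) = ta_scale c (ta_conj x);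
  ta_gaddC : forall h k, ta_gadd h k = ta_gadd k h;
  ta_embD : forall h s u, ta_emb h (s + u) = ta_emb h s + ta_emb h u;
  ta_scaleE : forall c h s, ta_scale c (ta_emb h s) = ta_emb h (c * s);
  ta_conjE : forall h s, ta_conj (ta_emb h s) = ta_emb h (ta_eps h * s);
  ta_mulE : forall h k s u,
    ta_mul (ta_emb h s) (ta_emb k u) = ta_emb (ta_gadd h k) (ta_sigma h k * (s * u));
  ta_projE : forall h k s, ta_proj h (ta_emb k s) = if h == k then s else 0;
  ta_projD : forall h x y, ta_proj h (x + y) = ta_proj h x + ta_proj h y;
  ta_projZ : forall h c x, ta_proj h (ta_scale c x) = c * ta_proj h x;
  ta_homE : forall h x, ta_hom h x = (x == ta_emb h (ta_proj h x));
  ta_sigma_neq0 : forall h k, ta_sigma h k != 0;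
  ta_eps_neq0 : forall h, ta_eps h != 0 }.

Section TwistedAlgebraTheory.
Variables (F : fieldType) (T : twisted_alg F).

Lemma ta_mul0l x : ta_mul T 0 x = 0.
Proof. by apply: (addrI (ta_mul T 0 x)); rewrite -ta_mulDl !addr0. Qed.

Lemma ta_mul0r x : ta_mul T x 0 = 0.
Proof. by apply: (addrI (ta_mul T x 0)); rewrite -ta_mulDr !addr0. Qed.

Lemma ta_conj0 : ta_conj T 0 = 0.
Proof. by apply: (addrI (ta_conj T 0)); rewrite -ta_conjD !addr0. Qed.

Lemma ta_scale0r c : ta_scale T c 0 = 0.
Proof. by apply: (addrI (ta_scale T c 0)); rewrite -ta_scaleDr !addr0. Qed.

Lemma ta_scale0l x : ta_scale T 0 x = 0.
Proof. by apply: (addrI (ta_scale T 0 x)); rewrite -ta_scaleDl !addr0. Qed.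

Lemma ta_scaleN c x : ta_scale T c (- x) = - ta_scale T c x.
Proof. by apply/eqP; rewrite -addr_eq0 -ta_scaleDr addNr ta_scale0r. Qed.

Lemma ta_scaleN1 x : ta_scale T (-1) x = - x.
Proof. by apply/eqP; rewrite -addr_eq0 -{2}[x]ta_scale1 -ta_scaleDl addNr ta_scale0l. Qed.

Lemma ta_emb0 h : ta_emb T h 0 = 0.
Proof. by apply: (addrI (ta_emb T h 0)); rewrite -ta_embD !addr0. Qed.

Lemma ta_embN h s : ta_emb T h (- s) = - ta_emb T h s.
Proof. by apply/eqP; rewrite -addr_eq0 -ta_embD addNr ta_emb0. Qed.

Lemma ta_proj0 h : ta_proj T h 0 = 0.
Proof. by apply: (addrI (ta_proj T h 0)); rewrite -ta_projD !addr0. Qed.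

Lemma ta_emb_inj h : injective (ta_emb T h).
Proof. by move=> s u /(congr1 (ta_proj T h)); rewrite !ta_projE eqxx. Qed.

Lemma ta_hom_emb h s : ta_hom T h (ta_emb T h s).
Proof. by rewrite ta_homE ta_projE eqxx. Qed.

Lemma ta_homP {h x} : ta_hom T h x -> x = ta_emb T h (ta_proj T h x).
Proof. by rewrite ta_homE => /eqP. Qed.

Lemma ta_mul_suml I (r : seq I) (P : pred I) (f : I -> ta_A T) y :
  ta_mul T (\sum_(i <- r | P i) f i) y = \sum_(i <- r | P i) ta_mul T (f i) y.
Proof. exact: (big_morph (ta_mul T ^~ y) (fun x z => ta_mulDl T x z y) (ta_mul0l y)). Qed.

Lemma ta_mul_sumr I (r : seq I) (P : pred I) (f : I -> ta_A T) y :
  ta_mul T y (\sum_(i <- r | P i) f i) = \sum_(i <- r | P i) ta_mul T y (f i).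
Proof. exact: (big_morph (ta_mul T y) (ta_mulDr T y) (ta_mul0r y)). Qed.

Lemma ta_scale_sum I (r : seq I) (P : pred I) (f : I -> ta_A T) c :
  ta_scale T c (\sum_(i <- r | P i) f i) = \sum_(i <- r | P i) ta_scale T c (f i).
Proof. exact: (big_morph (ta_scale T c) (ta_scaleDr T c) (ta_scale0r c)). Qed.

Lemma ta_emb_sum I (r : seq I) (P : pred I) (f : I -> F) h :
  ta_emb T h (\sum_(i <- r | P i) f i) = \sum_(i <- r | P i) ta_emb T h (f i).
Proof. exact: (big_morph (ta_emb T h) (ta_embD T h) (ta_emb0 h)). Qed.

Lemma ta_proj_sum I (r : seq I) (P : pred I) (f : I -> ta_A T) h :
  ta_proj T h (\sum_(i <- r | P i) f i) = \sum_(i <- r | P i) ta_proj T h (f i).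
Proof. exact: (big_morph (ta_proj T h) (ta_projD T h) (ta_proj0 h)). Qed.

End TwistedAlgebraTheory.

Lemma pairD (A B : zmodType) (a c : A) (b d : B) : (a, b) + (c, d) = (a + c, b + d).
Proof. by []. Qed.

Section CayleyDicksonLift.
Variables (F : fieldType) (T : twisted_alg F) (al : F).
Hypothesis al_neq0 : al != 0.

Definition cd_gadd (x y : ta_grade T * bool) := (ta_gadd T x.1 y.1, x.2 (+) y.2).
Definition cd_emb (x : ta_grade T * bool) (s : F) : ta_A T * ta_A T :=
  if x.2 then (0, ta_emb T x.1 s) else (ta_emb T x.1 s, 0).
Definition cd_proj (x : ta_grade T * bool) (u : ta_A T * ta_A T) : F :=
  ta_proj T x.1 (if x.2 then u.2 else u.1).
Definition cd_sigma (x y : ta_grade T * bool) : F :=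
  if x.2 then
    if y.2 then al * (ta_eps T x.1 * ta_sigma T y.1 x.1) else ta_sigma T y.1 x.1
  else
    if y.2 then ta_eps T x.1 * ta_sigma T x.1 y.1 else ta_sigma T x.1 y.1.
Definition cd_eps (x : ta_grade T * bool) : F := if x.2 then -1 else ta_eps T x.1.

Definition cd_lift : twisted_alg F.
refine (@TwistedAlg F [the zmodType of (ta_A T * ta_A T)%type]
  (cd_sc (ta_scale T)) (cd_mul (ta_scale T) (ta_mul T) (ta_conj T) al) (cd_cj (ta_conj T))
  [the eqType of (ta_grade T * bool)%type] (cd_hom (ta_hom T)) cd_gadd cd_emb cd_proj
  cd_sigma cd_eps _ _ _ _ _ _ _ _ _ _ _ _ _ _ _ _ _ _ _ _ _);
  rewrite /cd_sc /cd_mul /cd_cj /cd_hom /cd_gadd /cd_emb /cd_proj /cd_sigma /cd_eps.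
- by move=> c [x1 x2] [y1 y2]; rewrite /= !ta_scaleDr.
- by move=> c d [x1 x2]; rewrite /= !ta_scaleDl.
- by move=> c d [x1 x2]; rewrite /= !ta_scaleA.
- by move=> [x1 x2]; rewrite /= !ta_scale1.
- move=> [x1 x2] [y1 y2] [z1 z2] /=.
  by rewrite !ta_conjD !ta_mulDl !ta_mulDr ta_scaleDr; congr pair; rewrite addrACA.
- move=> [x1 x2] [y1 y2] [z1 z2] /=.
  by rewrite !ta_mulDl !ta_mulDr ta_scaleDr; congr pair; rewrite addrACA.
- move=> c [x1 x2] [y1 y2] /=.
  by rewrite !ta_conjZ !ta_mulZl !ta_mulZr !ta_scaleA !ta_scaleDr ta_scaleA [al * c]mulrC.
- move=> c [x1 x2] [y1 y2] /=.
  by rewrite !ta_mulZl !ta_mulZr !ta_scaleA !ta_scaleDr ta_scaleA [al * c]mulrC.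
- by move=> [x1 x2] [y1 y2]; rewrite /= ta_conjD opprD.
- by move=> c [x1 x2]; rewrite /= ta_conjZ ta_scaleN.
- by move=> [h b] [k c]; rewrite /= ta_gaddC addbC.
- by move=> [h []] s u; rewrite /= pairD ta_embD addr0.
- by move=> c [h []] s; rewrite /= ta_scaleE ta_scale0r.
- move=> [h []] s /=; first by rewrite ta_conj0 mulN1r ta_embN.
  by rewrite ta_conjE oppr0.
- move=> [h b] [k c] s u /=.
  case: b; case: c => /=;
    rewrite ?ta_conj0 ?ta_mul0l ?ta_mul0r ?ta_scale0r ?add0r ?addr0
            ?ta_conjE ?ta_mulE ?ta_scaleE //.
  + by rewrite ta_gaddC; congr (ta_emb _ _ _, _); ring.
  + by rewrite ta_gaddC; congr (_, ta_emb _ _ _); ring.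
  + by congr (_, ta_emb _ _ _); ring.
- move=> [h b] [k c] s /=.
  by case: b; case: c => /=;
    rewrite ?ta_projE ?ta_proj0 ?xpair_eqE ?andbT ?andbF //; case: (h == k).
- by move=> [h b] [x1 x2] [y1 y2]; case: b; rewrite /= ta_projD.
- by move=> [h b] c [x1 x2]; case: b; rewrite /= ta_projZ.
- by move=> [h b] [x1 x2]; case: b; rewrite /= xpair_eqE ta_homE // andbC.
- by move=> [h b] [k c]; case: b; case: c; rewrite /= ?mulf_neq0 ?ta_sigma_neq0 ?ta_eps_neq0.
- by move=> [h b]; case: b; rewrite /= ?oppr_eq0 ?oner_neq0 ?ta_eps_neq0.
Defined.

End CayleyDicksonLift.

Definition ta_base (F : fieldType) : twisted_alg F.
refine (@TwistedAlg F F (@sc0 F) (@mul0 F) (@cj0 F) unit (@hom0 F) (fun _ _ => tt)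
  (fun _ s => s) (fun _ x => x) (fun _ _ => 1) (fun _ => 1)
  _ _ _ _ _ _ _ _ _ _ _ _ _ _ _ _ _ _ _ _ _);
  rewrite /sc0 /mul0 /cj0 /hom0 //= => *;
  rewrite ?mulrDr ?mulrDl ?mulrA ?mul1r ?eqxx ?oner_neq0 //; congr (_ * _); exact: mulrC.
Defined.

(** * Subgroups of Z_2^3 *)

Lemma addGG (x : G) : x + x = 0. Proof. by case: x => [[[] []] []]. Qed.
Lemma oppG (x : G) : - x = x. Proof. by case: x => [[[] []] []]. Qed.

Lemma gen_min (A H : {set G}) : subgroup_closed H -> A \subset H -> gen A \subset H.
Proof. by move=> hH hA; apply: bigcap_inf; rewrite hH hA. Qed.

Lemma gen_in (A : {set G}) x : x \in A -> x \in gen A.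
Proof. by move=> hx; apply/bigcapP => H /andP [_ /subsetP]; apply. Qed.

Lemma gen0 (A : {set G}) : 0 \in gen A.
Proof. by apply/bigcapP => H /andP [/andP []]. Qed.

Lemma genD (A : {set G}) x y : x \in gen A -> y \in gen A -> x + y \in gen A.
Proof.
move=> /bigcapP hx /bigcapP hy; apply/bigcapP => H hH.
have /andP [/andP [_ /forall_inP hsub] _] := hH.
by have /forall_inP := hsub x (hx H hH); move/(_ y (hy H hH)); rewrite oppG.
Qed.

Definition bscale (e : bool) (a : G) : G := if e then a else 0.
Definition lin (a b c u : G) : G := bscale u.1.1 a + bscale u.1.2 b + bscale u.2 c.
(* An explicit enumeration of [G], so that [span3] computes. *)
Definition enumG : seq G :=
  [:: (false, false, false); (true, false, false); (false, true, false); (true, true, false);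
      (false, false, true); (true, false, true); (false, true, true); (true, true, true)].
Definition span3 (a b c : G) : seq G := [seq lin a b c u | u <- enumG].

Lemma mem_enumG u : u \in enumG. Proof. by case: u => [[[] []] []]. Qed.

Lemma linD a b c u w : lin a b c u + lin a b c w = lin a b c (u + w).
Proof.
have bscaleD e e' x : bscale e x + bscale e' x = bscale (e (+) e') x.
  by case: e; case: e'; rewrite /= ?addr0 ?add0r ?addGG.
case: u w => [[u1 u2] u3] [[w1 w2] w3].
by rewrite /lin addrACA -(addrACA (bscale u1 a)) !bscaleD.
Qed.

Lemma lin_gen (A : {set G}) a b c u :
  a \in gen A -> b \in gen A -> c \in gen A -> lin a b c u \in gen A.
Proof.
move=> ha hb hc; case: u => [[[] []] []];
  by rewrite /lin /bscale /= ?genD ?gen0.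
Qed.

Lemma span3_closed a b c : subgroup_closed [set x | x \in span3 a b c].
Proof.
rewrite /subgroup_closed inE; apply/andP; split.
  by apply/mapP; exists (false, false, false); rewrite ?mem_enumG // /lin /= !addr0.
apply/forall_inP => x; rewrite inE => /mapP [u _ ->].
apply/forall_inP => y; rewrite inE => /mapP [w _ ->].
by rewrite inE oppG linD map_f ?mem_enumG.
Qed.

Lemma gen_span3 (A : {set G}) a b c :
  A \subset [set x | x \in span3 a b c] -> a \in gen A -> b \in gen A -> c \in gen A ->
  gen A = [set x | x \in span3 a b c].
Proof.
move=> hA ha hb hc; apply/eqP; rewrite eqEsubset gen_min ?span3_closed //=.
by apply/subsetP => x; rewrite inE => /mapP [u _ ->]; apply: lin_gen.
Qed.

Lemma gen2E a b : gen [set a; b] = [set x | x \in span3 a b 0].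
Proof.
apply: gen_span3; rewrite ?gen0 ?gen_in ?inE ?eqxx ?orbT //.
apply/subsetP => x /set2P [] ->; rewrite in_set; apply/mapP.
  by exists (true, false, false); rewrite ?mem_enumG // /lin /= !addr0.
by exists (false, true, false); rewrite ?mem_enumG // /lin /= add0r addr0.
Qed.

Lemma gen3E a b c : gen [set a; b; c] = [set x | x \in span3 a b c].
Proof.
apply: gen_span3; rewrite ?gen_in ?inE ?eqxx ?orbT //.
apply/subsetP => x; rewrite !in_setU !in_set1 -orbA in_set => /or3P [] /eqP ->; apply/mapP.
- by exists (true, false, false); rewrite ?mem_enumG // /lin /= !addr0.
- by exists (false, true, false); rewrite ?mem_enumG // /lin /= add0r addr0.
- by exists (false, false, true); rewrite ?mem_enumG // /lin /= !add0r.
Qed.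

Lemma card_mem_seq (s : seq G) : #|[set x | x \in s]| = size (undup s).
Proof. by rewrite -(card_uniqP (undup_uniq s)); apply: eq_card => x; rewrite inE mem_undup. Qed.

Definition lindep2 (a b : G) := [|| a == 0, b == 0 | a == b].
Definition lindep3 (a b c : G) :=
  [|| a == 0, b == 0, c == 0, a == b, a == c, b == c | a + b == c].

Lemma card_gen2_le2 a b : (#|gen [set a; b]| <= 2)%N = lindep2 a b.
Proof. by rewrite gen2E card_mem_seq; case: a => [[[] []] []]; case: b => [[[] []] []]. Qed.

Lemma card_gen2_ge4 a b : (4 <= #|gen [set a; b]|)%N = ~~ lindep2 a b.
Proof. by rewrite gen2E card_mem_seq; case: a => [[[] []] []]; case: b => [[[] []] []]. Qed.

Lemma card_gen3_le4 a b c : (#|gen [set a; b; c]| <= 4)%N = lindep3 a b c.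
Proof.
rewrite gen3E card_mem_seq.
by case: a => [[[] []] []]; case: b => [[[] []] []]; case: c => [[[] []] []].
Qed.

Lemma gen3_full a b c : (gen [set a; b; c] == [set: G]) = ~~ lindep3 a b c.
Proof.
rewrite eqEcard subsetT cardsT !card_prod card_bool /= gen3E card_mem_seq.
by case: a => [[[] []] []]; case: b => [[[] []] []]; case: c => [[[] []] []].
Qed.

(** * Polynomial functions over an infinite field *)

Section MonomialSums.
Context {F : fieldType}.
Hypothesis F_infinite : forall s : seq F, exists x : F, x \notin s.

Lemma poly_fun_eq0 (p : {poly F}) : (forall z, p.[z] = 0) -> p = 0.
Proof.
move=> p0; apply/eqP; apply: contraT => pn0.
have [s [s_uniq s_size]] : exists s : seq F, uniq s /\ size s = size p.
  elim: (size p) => [|n [s [us <-]]]; first by exists [::].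
  by have [x hx] := F_infinite s; exists (x :: s); rewrite /= hx us.
have s_roots : all (root p) s by apply/allP => z _; rewrite /root p0.
by have := max_poly_roots pn0 s_roots s_uniq; rewrite s_size ltnn.
Qed.

Context {K : eqType}.

(* A monomial sum lists pairs (coefficient, variables of the monomial with
   multiplicity); monomials are equal up to permutation of their variables. *)
Definition msum_fun (I : seq (F * seq K)) (t : K -> F) : F :=
  \sum_(w <- I) w.1 * \prod_(x <- w.2) t x.

Lemma perm_eq_count_filter (x : K) s t :
  perm_eq s t = (count_mem x s == count_mem x t) &&
                perm_eq (filter (predC1 x) s) (filter (predC1 x) t).
Proof.
apply/idP/andP => [st | [/eqP cst fst]]; first by rewrite (permP st) perm_filter.
apply/allP => a _ /=; have [-> | ax] := eqVneq a x; first by rewrite cst.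
have count_filter u : count_mem a (filter (predC1 x) u) = count_mem a u.
  by rewrite count_filter; apply: eq_count => y /=; case: eqP => // ->; rewrite ax.
by rewrite -(count_filter s) -(count_filter t) (permP fst).
Qed.

Lemma prod_if_count (x : K) (z : F) (t : K -> F) l :
  \prod_(y <- l) (if y == x then z else t y) =
  z ^+ count_mem x l * \prod_(y <- filter (predC1 x) l) t y.
Proof.
elim: l => [|y l IH]; first by rewrite !big_nil mulr1.
rewrite big_cons IH /=; case: eqP => [-> | _] /=.
  by rewrite add1n exprS mulrA.
by rewrite big_cons add0n mulrCA.
Qed.

Definition msum_slice (x : K) (e : nat) (I : seq (F * seq K)) :=
  [seq (w.1, filter (predC1 x) w.2) | w <- I & count_mem x w.2 == e].

Lemma msum_slice_eq0 x e I :
  (forall t, msum_fun I t = 0) -> forall t, msum_fun (msum_slice x e I) t = 0.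
Proof.
move=> I0 t.
pose P := \sum_(w <- I) (w.1 * \prod_(y <- filter (predC1 x) w.2) t y) *: 'X^(count_mem x w.2).
have P0 : P = 0.
  apply: poly_fun_eq0 => z.
  rewrite horner_sum -[RHS](I0 (fun y => if y == x then z else t y)).
  apply: eq_bigr => w _; rewrite hornerZ hornerXn prod_if_count.
  by rewrite mulrAC mulrA.
have := congr1 (fun p : {poly F} => p`_e) P0; rewrite coef_sum coef0 => <-.
rewrite /msum_fun big_map big_filter big_mkcond /=; apply: eq_bigr => w _.
by rewrite coefZ coefXn eq_sym; case: eqP; rewrite ?mulr1 ?mulr0.
Qed.

Lemma msum_const_coef I l0 : (forall w, w \in I -> w.2 = [::]) ->
  \sum_(w <- I | perm_eq w.2 l0) w.1 = (perm_eq [::] l0)%:R * msum_fun I (fun _ => 0).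
Proof.
elim: I => [|w I IH] I_const; first by rewrite /msum_fun !big_nil mulr0.
rewrite /msum_fun !big_cons -/(msum_fun I _) IH => [|v vI]; last by rewrite I_const ?inE ?vI ?orbT.
rewrite I_const ?mem_head // big_nil mulr1 mulrDr.
by case: (perm_eq [::] l0); rewrite ?mul1r ?mul0r ?add0r.
Qed.

Lemma monomial_sum_eq0 (I : seq (F * seq K)) :
  (forall t, msum_fun I t = 0) -> forall l0, \sum_(w <- I | perm_eq w.2 l0) w.1 = 0.
Proof.
move=> I0 l0; have [N] := ubnP (\sum_(w <- I) size w.2).
elim: N I I0 l0 => // N IH I I0 l0 hN.
have [/hasP [w0 w0I] | /hasPn I_const] := boolP (has (fun w => w.2 != [::]) I); last first.
  by rewrite msum_const_coef ?I0 ?mulr0 // => w /I_const /negPn /eqP.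
case e0: w0.2 => [//|x l] _.
(* Read the sum as a polynomial in [t x]: each coefficient is a smaller monomial sum. *)
rewrite -[RHS](IH (msum_slice x (count_mem x l0) I) _ (filter (predC1 x) l0)).
- rewrite big_map big_filter_cond; apply: eq_bigl => w /=.
  by rewrite (perm_eq_count_filter x).
- exact: msum_slice_eq0.
have slice_size : (\sum_(w <- msum_slice x (count_mem x l0) I) size w.2 <=
                   \sum_(w <- I) size (filter (predC1 x) w.2))%N.
  by rewrite big_map big_filter big_mkcond /=; apply: leq_sum => w _; case: ifP.
have size_split : (\sum_(w <- I) size w.2 =
   \sum_(w <- I) size (filter (predC1 x) w.2) + \sum_(w <- I) count_mem x w.2)%N.
  rewrite -big_split; apply: eq_bigr => w _.
  by rewrite size_filter -(count_predC (pred1 x) w.2) addnC.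
have x_occurs : (0 < \sum_(w <- I) count_mem x w.2)%N.
  by rewrite (big_rem _ w0I) e0 /= eqxx.
lia.
Qed.

End MonomialSums.

(** * The free algebra and graded T-ideals *)

Fixpoint mono_eqb (m1 m2 : mono) : bool :=
  match m1, m2 with
  | MVar i a, MVar j b => (i == j) && (a == b)
  | MMul p q, MMul p' q' => mono_eqb p p' && mono_eqb q q'
  | _, _ => false
  end.

Lemma mono_eqP : Equality.axiom mono_eqb.
Proof.
elim=> [i a|p IHp q IHq] [j b|p' q'] /=; try by constructor.
  by apply: (iffP andP) => [[/eqP -> /eqP ->]|[-> ->]].
by apply: (iffP andP) => [[/IHp -> /IHq ->]|[<- <-]]; split; [apply/IHp|apply/IHq].
Qed.

HB.instance Definition _ := hasDecEq.Build mono mono_eqP.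

Fixpoint tmono {F : fieldType} (m : mono) : term F :=
  match m with MVar i a => TVar i a | MMul p q => TMul (tmono p) (tmono q) end.

Section FreeAlgebra.
Context {F : fieldType}.

Lemma coef_tmono m m' : coef (tmono m : term F) m' = (m == m')%:R.
Proof.
elim: m m' => [i a|p IHp q IHq] [j b|p' q'] //=.
by rewrite IHp IHq -natrM mulnb.
Qed.

Lemma homog_tmono m : homog (mdeg m) (tmono m : term F).
Proof. by move=> m'; rewrite coef_tmono; have [->|] := eqVneq m m'; rewrite ?eqxx. Qed.

Lemma homog_var i a : homog a (@TVar F i a).
Proof. exact: (homog_tmono (MVar i a)). Qed.

(* A superset of the support of [coef p]. *)
Fixpoint supp (p : term F) : seq mono :=
  match p with
  | TVar i a => [:: MVar i a]
  | TZero => [::]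
  | TAdd p q => supp p ++ supp q
  | TScale _ p => supp p
  | TMul p q => [seq MMul x y | x <- supp p, y <- supp q]
  end.

Lemma supp_coef p m : coef p m != 0 -> m \in supp p.
Proof.
elim: p m => [i a||p IHp q IHq|c p IHp|p IHp q IHq] m /=.
- case: m => [j b|m1 m2]; rewrite ?eqxx // mem_seq1.
  by case: (eqVneq i j) => [->|]; case: (eqVneq a b) => [->|]; rewrite ?eqxx.
- by rewrite eqxx.
- rewrite mem_cat; have [-> | /IHp -> //] := eqVneq (coef p m) 0.
  by rewrite add0r => /IHq ->; rewrite orbT.
- by rewrite mulf_eq0 negb_or => /andP [_ /IHp].
- case: m => [j b|m1 m2]; rewrite ?eqxx //.
  by rewrite mulf_eq0 negb_or => /andP [/IHp h1 /IHq h2]; apply: allpairs_f.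
Qed.

Definition tsum (ps : seq (term F)) : term F := foldr (@TAdd F) TZero ps.

Lemma coef_tsum ps m : coef (tsum ps) m = \sum_(p <- ps) coef p m.
Proof. by elim: ps => [|p ps IH]; rewrite ?big_nil ?big_cons //= IH. Qed.

Section TClosedTheory.
Variable I : term F -> Prop.
Hypothesis I_closed : TClosed I.

Lemma tclosed_peq {p q} : peq p q -> I p -> I q.
Proof. by case: I_closed => [[h _] _ _ _ _]; apply: h. Qed.
Lemma tclosed0 : I TZero.
Proof. by case: I_closed => [[_ h] _ _ _ _]. Qed.
Lemma tclosedD {p q} : I p -> I q -> I (TAdd p q).
Proof. by case: I_closed => [_ h _ _ _]; apply: h. Qed.
Lemma tclosedZ c {p} : I p -> I (TScale c p).
Proof. by case: I_closed => [_ _ h _ _]; apply: h. Qed.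
Lemma tclosedMl {p} q : I p -> I (TMul p q).
Proof. by case: I_closed => [_ _ _ [h _] _]; apply: h. Qed.
Lemma tclosedMr p {q} : I q -> I (TMul p q).
Proof. by case: I_closed => [_ _ _ [_ h] _]; apply: h. Qed.
Lemma tclosed_subst {s p} : graded_endo s -> I p -> I (subst s p).
Proof. by case: I_closed => [_ _ _ _ h] hs; apply: h. Qed.

Lemma tclosed_tsum (X : Type) (f : X -> term F) xs :
  (forall x, I (f x)) -> I (tsum (map f xs)).
Proof. by move=> fI; elim: xs => [|x xs IH]; [apply: tclosed0 | apply: tclosedD]. Qed.

End TClosedTheory.

Lemma TGen_closed (S : term F -> Prop) : TClosed (TGen S).
Proof.
split; [split| | | split|].
- by move=> p q pq hp I hI hS; apply: (tclosed_peq hI pq); apply: hp.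
- by move=> I hI _; apply: tclosed0.
- by move=> p q hp hq I hI hS; apply: tclosedD (hp I hI hS) (hq I hI hS).
- by move=> c p hp I hI hS; apply: tclosedZ (hp I hI hS).
- by move=> p q hp I hI hS; apply: tclosedMl (hp I hI hS).
- by move=> p q hq I hI hS; apply: tclosedMr (hq I hI hS).
- by move=> s hs p hp I hI hS; apply: tclosed_subst (hp I hI hS).
Qed.

Lemma TGen_in {S : term F -> Prop} {p} : S p -> TGen S p.
Proof. by move=> hp I _; apply. Qed.

End FreeAlgebra.

(** * Evaluation in a G-graded twisted algebra *)

Lemma sum_uniq_support (V : nmodType) (X : eqType) (S1 S2 : seq X) (g : X -> V) :
  uniq S1 -> uniq S2 -> (forall x, g x != 0 -> (x \in S1) && (x \in S2)) ->
  \sum_(x <- S1) g x = \sum_(x <- S2) g x.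
Proof.
move=> S1_uniq S2_uniq g_supp.
have drop0 S : \sum_(x <- S) g x = \sum_(x <- filter (fun x => g x != 0) S) g x.
  by rewrite big_filter [RHS]big_mkcond; apply: eq_bigr => x _; have [->|] := eqVneq (g x) 0.
rewrite (drop0 S1) (drop0 S2); apply/perm_big/uniq_perm; rewrite ?filter_uniq // => x.
by rewrite !mem_filter; case: (boolP (g x != 0)) => // /g_supp /andP [-> ->].
Qed.

Section GradedEvaluation.
Variables (F : fieldType) (T : twisted_alg F) (gr : G -> ta_grade T).
Hypothesis gr_add : forall a b, ta_gadd T (gr a) (gr b) = gr (a + b).

Local Notation scale := (ta_scale T).
Local Notation mul := (ta_mul T).
Local Notation emb := (ta_emb T).

Fixpoint ta_eval (v : nat -> G -> ta_A T) (p : term F) : ta_A T :=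
  match p with
  | TVar i a => v i a
  | TZero => 0
  | TAdd p q => ta_eval v p + ta_eval v q
  | TScale c p => scale c (ta_eval v p)
  | TMul p q => mul (ta_eval v p) (ta_eval v q)
  end.

Definition ta_identity (f : term F) : Prop :=
  forall v, (forall i a, ta_hom T (gr a) (v i a)) -> ta_eval v f = 0.

Lemma ta_eval_expand v p {S : seq mono} : uniq S -> {subset supp p <= S} ->
  ta_eval v p = \sum_(m <- S) scale (coef p m) (ta_eval v (tmono m)).
Proof.
have supp_ext q S1 S2 : uniq S1 -> uniq S2 -> {subset supp q <= S1} -> {subset supp q <= S2} ->
    \sum_(m <- S1) scale (coef q m) (ta_eval v (tmono m)) =
    \sum_(m <- S2) scale (coef q m) (ta_eval v (tmono m)).
  move=> uS1 uS2 sS1 sS2; apply: sum_uniq_support => // m.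
  have [->|/supp_coef qm _] := eqVneq (coef q m) 0; first by rewrite ta_scale0l eqxx.
  by rewrite sS1 ?sS2.
elim: p S => [i a||p IHp q IHq|c p IHp|p IHp q IHq] S uS sS.
- rewrite (supp_ext (TVar i a) S [:: MVar i a]) ?big_seq1 //= ?eqxx ?mulr1n ?ta_scale1 //.
- by rewrite big1 // => m _; rewrite ta_scale0l.
- have sp : {subset supp p <= S} by move=> m hm; rewrite sS // mem_cat hm.
  have sq : {subset supp q <= S} by move=> m hm; rewrite sS // mem_cat hm orbT.
  rewrite [LHS]/= (IHp S) // (IHq S) // -big_split.
  by apply: eq_bigr => m _; rewrite ta_scaleDl.
- rewrite [LHS]/= (IHp S) // ta_scale_sum; apply: eq_bigr => m _; by rewrite ta_scaleA.
- set Sp := undup (supp p); set Sq := undup (supp q).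
  have sp : {subset supp p <= Sp} by move=> m; rewrite mem_undup.
  have sq : {subset supp q <= Sq} by move=> m; rewrite mem_undup.
  rewrite [LHS]/= (IHp Sp) ?undup_uniq // (IHq Sq) ?undup_uniq //.
  rewrite (supp_ext _ S [seq MMul x y | x <- Sp, y <- Sq]) //; last first.
  + by move=> m /allpairsP [[x y] /= [hx hy ->]]; rewrite allpairs_f // mem_undup.
  + apply: allpairs_uniq; rewrite ?undup_uniq //.
    by move=> [x1 y1] [x2 y2] _ _ /= [-> ->].
  rewrite big_allpairs_dep ta_mul_suml /=; apply: eq_bigr => x _.
  rewrite ta_mulZl ta_mul_sumr ta_scale_sum; apply: eq_bigr => y _.
  by rewrite ta_mulZr ta_scaleA mulrC.
Qed.


Lemma ta_eval_peq v p q : peq p q -> ta_eval v p = ta_eval v q.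
Proof.
move=> pq; have uS := undup_uniq (supp p ++ supp q).
rewrite (ta_eval_expand v p uS) => [|m hm]; last by rewrite mem_undup mem_cat hm.
rewrite [RHS](ta_eval_expand v q uS) => [|m hm]; last by rewrite mem_undup mem_cat hm orbT.
by apply: eq_bigr => m _; rewrite pq.
Qed.

Lemma ta_eval_tsum v ps : ta_eval v (tsum ps) = \sum_(p <- ps) ta_eval v p.
Proof. by elim: ps => [|p ps IH]; rewrite ?big_nil ?big_cons //= IH. Qed.

Lemma ta_eval_subst s v p : ta_eval v (subst s p) = ta_eval (fun i a => ta_eval v (s i a)) p.
Proof. by elim: p => //= [p -> q ->|c p ->|p -> q ->]. Qed.

Lemma eq_ta_eval v v' p : v =2 v' -> ta_eval v p = ta_eval v' p.
Proof. by move=> vv'; elim: p => //= [p -> q ->|c p ->|p -> q ->]. Qed.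

Fixpoint mono_sigma (m : mono) : F :=
  match m with
  | MVar _ _ => 1
  | MMul p q => ta_sigma T (gr (mdeg p)) (gr (mdeg q)) * (mono_sigma p * mono_sigma q)
  end.

Fixpoint mono_prod (t : nat -> G -> F) (m : mono) : F :=
  match m with MVar i a => t i a | MMul p q => mono_prod t p * mono_prod t q end.

Lemma mono_sigma_neq0 m : mono_sigma m != 0.
Proof. by elim: m => //= [_ _|p IHp q IHq]; rewrite ?oner_neq0 // !mulf_neq0 ?ta_sigma_neq0. Qed.

Lemma ta_eval_tmono t m :
  ta_eval (fun i a => emb (gr a) (t i a)) (tmono m) =
  emb (gr (mdeg m)) (mono_sigma m * mono_prod t m).
Proof.
elim: m => [i a|p IHp q IHq] /=; first by rewrite mul1r.
by rewrite IHp IHq ta_mulE gr_add; congr emb; ring.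
Qed.

Lemma ta_eval_homog v a p :
  (forall i b, ta_hom T (gr b) (v i b)) -> homog a p -> ta_hom T (gr a) (ta_eval v p).
Proof.
move=> v_hom p_hom; pose t i b := ta_proj T (gr b) (v i b).
rewrite (eq_ta_eval (v' := fun i b => emb (gr b) (t i b))) => [|i b]; last exact: ta_homP.
rewrite (ta_eval_expand _ p (undup_uniq (supp p))) => [|m]; last by rewrite mem_undup.
rewrite (eq_bigr (fun m => emb (gr a) (coef p m * (mono_sigma m * mono_prod t m)))).
  by rewrite -ta_emb_sum ta_hom_emb.
move=> m _; rewrite ta_eval_tmono ta_scaleE.
by have [->|/p_hom ->] := eqVneq (coef p m) 0; rewrite ?mul0r ?ta_emb0.
Qed.

Lemma ta_identity_tclosed : TClosed ta_identity.
Proof.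
split; [split| | | split|].
- by move=> p q pq hp v hv; rewrite -(ta_eval_peq v pq) hp.
- by [].
- by move=> p q hp hq v hv /=; rewrite hp ?hq ?addr0.
- by move=> c p hp v hv /=; rewrite hp ?ta_scale0r.
- by move=> p q hp v hv /=; rewrite hp ?ta_mul0l.
- by move=> p q hq v hv /=; rewrite hq ?ta_mul0r.
- move=> s s_graded p hp v hv; rewrite ta_eval_subst; apply: hp => i a.
  exact: ta_eval_homog.
Qed.

Section GeneratorIdentities.
Variables (i j k : nat) (a b c : G).
Local Notation x := (TVar i a).
Local Notation y := (TVar j b).
Local Notation z := (TVar k c).
Local Notation sigma a b := (ta_sigma T (gr a) (gr b)).

Lemma ta_identity_comm : sigma a b = sigma b a -> ta_identity (tcomm x y).
Proof.
move=> sab v hv /=; rewrite (ta_homP _ (hv i a)) (ta_homP _ (hv j b)).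
rewrite !ta_mulE ta_scaleE !gr_add [b + a]addrC -ta_embD sab.
by rewrite mulN1r [_ * ta_proj _ _ _]mulrC subrr ta_emb0.
Qed.

Lemma ta_identity_jord : sigma a b = - sigma b a -> ta_identity (tjord x y).
Proof.
move=> sab v hv /=; rewrite (ta_homP _ (hv i a)) (ta_homP _ (hv j b)).
rewrite !ta_mulE !gr_add [b + a]addrC -ta_embD sab.
by rewrite mulNr [_ * ta_proj _ _ _]mulrC addNr ta_emb0.
Qed.

Lemma ta_identity_assoc :
  sigma a b * sigma (a + b) c = sigma b c * sigma a (b + c) -> ta_identity (tassoc x y z).
Proof.
move=> sabc v hv /=; rewrite (ta_homP _ (hv i a)) (ta_homP _ (hv j b)) (ta_homP _ (hv k c)).
rewrite !ta_mulE ta_scaleE !gr_add addrA -ta_embD.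
set s := ta_proj _ _ (v i a); set u := ta_proj _ _ (v j b); set w := ta_proj _ _ (v k c).
have -> : sigma (a + b) c * (sigma a b * (s * u) * w) +
          -1 * (sigma a (b + c) * (s * (sigma b c * (u * w)))) =
          (sigma a b * sigma (a + b) c - sigma b c * sigma a (b + c)) * (s * u * w) by ring.
by rewrite sabc subrr mul0r ta_emb0.
Qed.

Lemma ta_identity_antiassoc :
  sigma a b * sigma (a + b) c = - (sigma b c * sigma a (b + c)) -> ta_identity (tantiassoc x y z).
Proof.
move=> sabc v hv /=; rewrite (ta_homP _ (hv i a)) (ta_homP _ (hv j b)) (ta_homP _ (hv k c)).
rewrite !ta_mulE !gr_add addrA -ta_embD.
set s := ta_proj _ _ (v i a); set u := ta_proj _ _ (v j b); set w := ta_proj _ _ (v k c).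
have -> : sigma (a + b) c * (sigma a b * (s * u) * w) +
          sigma a (b + c) * (s * (sigma b c * (u * w))) =
          (sigma a b * sigma (a + b) c + sigma b c * sigma a (b + c)) * (s * u * w) by ring.
by rewrite sabc addNr mul0r ta_emb0.
Qed.

End GeneratorIdentities.

End GradedEvaluation.

(** * The octonions *)

(* If [ta_sigma] has sign [(-1) ^+ sb] and [ta_eps h = (-1) ^+ nz h], then
   [cd_sigma] has sign [(-1) ^+ cd_sbit sb nz]; over the base field, [nz h]
   says that the grade [h] is nonzero. *)
Definition cd_sbit (H : Type) (sb : H -> H -> bool) (nz : H -> bool) (x y : H * bool) : bool :=
  if x.2 then (if y.2 then nz x.1 (+) sb y.1 x.1 else sb y.1 x.1)
  else (if y.2 then nz x.1 (+) sb x.1 y.1 else sb x.1 y.1).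

Definition oct_grade (g : G) : unit * bool * bool * bool := (tt, g.1.1, g.1.2, g.2).

Lemma oct_grade_inj : injective oct_grade.
Proof. by case=> [[? ?] ?] [[? ?] ?] [-> -> ->]. Qed.

Definition oct_sbit (a b : G) : bool :=
  let sb1 := cd_sbit (fun _ _ : unit => false) (fun _ => false) in
  let sb2 := cd_sbit sb1 (fun h => h.2) in
  cd_sbit sb2 (fun h => h.1.2 || h.2) (oct_grade a) (oct_grade b).

Lemma oct_sbit_comm a b : lindep2 a b -> oct_sbit a b = oct_sbit b a.
Proof. by case: a => [[[] []] []]; case: b => [[[] []] []]. Qed.

Lemma oct_sbit_anticomm a b : ~~ lindep2 a b -> oct_sbit a b = ~~ oct_sbit b a.
Proof. by case: a => [[[] []] []]; case: b => [[[] []] []]. Qed.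

Lemma oct_sbit_assoc a b c : lindep3 a b c ->
  oct_sbit a b (+) oct_sbit (a + b) c = oct_sbit b c (+) oct_sbit a (b + c).
Proof. by case: a => [[[] []] []]; case: b => [[[] []] []]; case: c => [[[] []] []]. Qed.

Lemma oct_sbit_antiassoc a b c : ~~ lindep3 a b c ->
  oct_sbit a b (+) oct_sbit (a + b) c = ~~ (oct_sbit b c (+) oct_sbit a (b + c)).
Proof. by case: a => [[[] []] []]; case: b => [[[] []] []]; case: c => [[[] []] []]. Qed.

Section Octonions.
Variables (F : fieldType) (al be ga : F).
Hypotheses (al_neq0 : al != 0) (be_neq0 : be != 0) (ga_neq0 : ga != 0).

Definition oct_alg : twisted_alg F :=
  cd_lift (cd_lift (cd_lift (ta_base F) al al_neq0) be be_neq0) ga ga_neq0.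

Lemma oct_grade_add a b :
  ta_gadd oct_alg (oct_grade a) (oct_grade b) = oct_grade (a + b).
Proof. by case: a => [[? ?] ?]; case: b => [[? ?] ?]. Qed.

Lemma evalO_ta_eval v p : evalO al be ga v p = ta_eval oct_alg v p.
Proof.
have mulOE : mulO al be ga = ta_mul oct_alg by [].
by elim: p => [i a||p IHp q IHq|c p IHp|p IHp q IHq]; cbn [evalO ta_eval]; rewrite ?IHp ?IHq ?mulOE.
Qed.

Lemma graded_identity_OE f :
  graded_identity_O al be ga f <-> ta_identity oct_alg oct_grade f.
Proof.
have homOE g x : homO g x = ta_hom oct_alg (oct_grade g) x by [].
split=> f_id v v_hom; first by rewrite -evalO_ta_eval; apply: f_id => i a; rewrite homOE.
by rewrite evalO_ta_eval; apply: f_id => i a; rewrite -homOE.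
Qed.

Local Notation sigma a b := (ta_sigma oct_alg (oct_grade a) (oct_grade b)).

Definition oct_mag (a b : G) : F :=
  al ^+ (a.1.1 && b.1.1) * be ^+ (a.1.2 && b.1.2) * ga ^+ (a.2 && b.2).

Lemma oct_sigmaE a b : sigma a b = (-1) ^+ oct_sbit a b * oct_mag a b.
Proof.
by case: a => [[[] []] []]; case: b => [[[] []] []];
  rewrite /oct_sbit /oct_mag /oct_grade /=; do 3 rewrite /cd_sigma /cd_eps /=; ring.
Qed.

Lemma oct_mag_comm a b : oct_mag a b = oct_mag b a.
Proof. by rewrite /oct_mag andbC [a.1.2 && _]andbC [a.2 && _]andbC. Qed.

Lemma oct_mag_cocycle a b c : oct_mag a b * oct_mag (a + b) c = oct_mag b c * oct_mag a (b + c).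
Proof.
have expA (x : F) u v w :
    x ^+ (u && v) * x ^+ ((u (+) v) && w) = x ^+ (v && w) * x ^+ (u && (v (+) w)).
  by rewrite -!exprD; case: u; case: v; case: w.
case: a b c => [[a1 a2] a3] [[b1 b2] b3] [[c1 c2] c3]; rewrite /oct_mag /=.
have mul3ACA (x1 y1 z1 x2 y2 z2 : F) :
  x1 * y1 * z1 * (x2 * y2 * z2) = x1 * x2 * (y1 * y2) * (z1 * z2) by ring.
by rewrite !mul3ACA !expA.
Qed.

Lemma oct_sigma_comm a b : lindep2 a b -> sigma a b = sigma b a.
Proof. by move=> ab; rewrite !oct_sigmaE oct_sbit_comm // oct_mag_comm. Qed.

Lemma oct_sigma_anticomm a b : ~~ lindep2 a b -> sigma a b = - sigma b a.
Proof. by move=> ab; rewrite !oct_sigmaE oct_sbit_anticomm // signrN mulNr oct_mag_comm. Qed.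

Lemma oct_sigma_assoc a b c : lindep3 a b c ->
  sigma a b * sigma (a + b) c = sigma b c * sigma a (b + c).
Proof.
move=> abc; rewrite !oct_sigmaE mulrACA [RHS]mulrACA -!signr_addb.
by rewrite oct_sbit_assoc // oct_mag_cocycle.
Qed.

Lemma oct_sigma_antiassoc a b c : ~~ lindep3 a b c ->
  sigma a b * sigma (a + b) c = - (sigma b c * sigma a (b + c)).
Proof.
move=> abc; rewrite !oct_sigmaE mulrACA [in RHS]mulrACA -!signr_addb.
by rewrite oct_sbit_antiassoc // signrN mulNr oct_mag_cocycle.
Qed.

Lemma oct_gens_identity f : oct_gens f -> ta_identity oct_alg oct_grade f.
Proof.
have gr_add := oct_grade_add.
case=> [[i [j [a [b [_ [ab ->]]]]]] | [[i [j [a [b [_ [ab ->]]]]]] |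
        [[i [j [k [a [b [c [_ _ _ abc ->]]]]]]] | [i [j [k [a [b [c [_ _ _ abc ->]]]]]]]]]].
- by apply: ta_identity_comm => //; apply: oct_sigma_comm; rewrite -card_gen2_le2.
- by apply: ta_identity_jord => //; apply: oct_sigma_anticomm; rewrite -card_gen2_ge4.
- by apply: ta_identity_assoc => //; apply: oct_sigma_assoc; rewrite -card_gen3_le4.
- by apply: ta_identity_antiassoc => //; apply: oct_sigma_antiassoc; rewrite -gen3_full abc.
Qed.
End Octonions.

(** * Normal forms modulo the generators *)

Section Reassociation.
Context {F : fieldType}.
Local Notation J := (TGen (@oct_gens F)).
Local Notation J_closed := (TGen_closed (@oct_gens F)).

Definition propJ (p q : term F) := exists lam : F, J (TAdd p (TScale lam q)).

Lemma propJ_refl p : propJ p p.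
Proof.
exists (-1); apply: (tclosed_peq J_closed _ (tclosed0 J_closed)) => m /=.
by rewrite mulN1r subrr.
Qed.

Lemma propJ_trans p q r : propJ p q -> propJ q r -> propJ p r.
Proof.
move=> [l Jpq] [u Jqr]; exists (- (l * u)).
apply: (tclosed_peq J_closed _ (tclosedD J_closed Jpq (tclosedZ J_closed (- l) Jqr))).
by move=> m /=; ring.
Qed.

Lemma propJ_mull r p q : propJ p q -> propJ (TMul r p) (TMul r q).
Proof.
move=> [l Jpq]; exists l; apply: (tclosed_peq J_closed _ (tclosedMr J_closed r Jpq)).
by case=> [i a|m1 m2] /=; [rewrite mulr0 addr0 | ring].
Qed.

Lemma propJ_mulr r p q : propJ p q -> propJ (TMul p r) (TMul q r).
Proof.
move=> [l Jpq]; exists l; apply: (tclosed_peq J_closed _ (tclosedMl J_closed r Jpq)).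
by case=> [i a|m1 m2] /=; [rewrite mulr0 addr0 | ring].
Qed.

Definition subst3 (p q r : term F) (a b c : G) (k : nat) (d : G) : term F :=
  if (k == 0%N) && (d == a) then p
  else if (k == 1%N) && (d == b) then q
  else if (k == 2%N) && (d == c) then r
  else TVar k d.

Lemma subst3_graded p q r a b c :
  homog a p -> homog b q -> homog c r -> graded_endo (subst3 p q r a b c).
Proof.
move=> hp hq hr k d; rewrite /subst3.
have [/andP [_ /eqP -> //]|_] := boolP ((k == 0%N) && (d == a)).
have [/andP [_ /eqP -> //]|_] := boolP ((k == 1%N) && (d == b)).
have [/andP [_ /eqP -> //]|_] := boolP ((k == 2%N) && (d == c)).
exact: homog_var.
Qed.

Lemma propJ_comm p q a b : homog a p -> homog b q -> propJ (TMul p q) (TMul q p).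
Proof.
move=> hp hq; have sg := subst3_graded hp hq (homog_var 2 0).
have [ab | ab] := boolP (lindep2 a b).
  have g : @oct_gens F (tcomm (TVar 0 a) (TVar 1 b)).
    by left; exists 0%N, 1%N, a, b; rewrite card_gen2_le2.
  have := tclosed_subst J_closed sg (TGen_in g); rewrite /= /subst3 /= !eqxx /= => Jg.
  by exists (-1).
have g : @oct_gens F (tjord (TVar 0 a) (TVar 1 b)).
  by right; left; exists 0%N, 1%N, a, b; rewrite card_gen2_ge4.
have := tclosed_subst J_closed sg (TGen_in g); rewrite /= /subst3 /= !eqxx /= => Jg.
by exists 1; apply: (tclosed_peq J_closed _ Jg) => m /=; rewrite mul1r.
Qed.

Lemma gens_reassoc p q r a b c : homog a p -> homog b q -> homog c r ->
  exists2 lam : F, lam ^+ 2 = 1 & J (TAdd (TMul (TMul p q) r) (TScale lam (TMul p (TMul q r)))).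
Proof.
move=> hp hq hr; have sg := subst3_graded hp hq hr.
have [abc | abc] := boolP (lindep3 a b c).
  have g : @oct_gens F (tassoc (TVar 0 a) (TVar 1 b) (TVar 2 c)).
    by right; right; left; exists 0%N, 1%N, 2%N, a, b, c; rewrite card_gen3_le4.
  have := tclosed_subst J_closed sg (TGen_in g); rewrite /= /subst3 /= !eqxx /= => Jg.
  by exists (-1); rewrite ?sqrrN ?expr1n.
have g : @oct_gens F (tantiassoc (TVar 0 a) (TVar 1 b) (TVar 2 c)).
  right; right; right; exists 0%N, 1%N, 2%N, a, b, c.
  by split=> //; apply/eqP; rewrite gen3_full.
have := tclosed_subst J_closed sg (TGen_in g); rewrite /= /subst3 /= !eqxx /= => Jg.
exists 1; rewrite ?expr1n //.
by apply: (tclosed_peq J_closed _ Jg) => m /=; rewrite mul1r.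
Qed.

Lemma propJ_assoc p q r a b c : homog a p -> homog b q -> homog c r ->
  propJ (TMul (TMul p q) r) (TMul p (TMul q r)) /\ propJ (TMul p (TMul q r)) (TMul (TMul p q) r).
Proof.
move=> hp hq hr; have [l l2 Jl] := gens_reassoc hp hq hr; split; first by exists l.
exists l; apply: (tclosed_peq J_closed _ (tclosedZ J_closed l Jl)) => m /=.
by rewrite mulrDr mulrA -expr2 l2 mul1r addrC.
Qed.

End Reassociation.

Fixpoint mvars (m : mono) : seq (nat * G) :=
  match m with MVar i a => [:: (i, a)] | MMul p q => mvars p ++ mvars q end.

Fixpoint rnormed (x : nat * G) (l : seq (nat * G)) : mono :=
  if l is y :: l' then MMul (MVar x.1 x.2) (rnormed y l') else MVar x.1 x.2.

Definition var_le : rel (nat * G) := fun x y => (pickle x <= pickle y)%N.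

Lemma var_le_total : total var_le. Proof. by move=> x y; apply: leq_total. Qed.
Lemma var_le_trans : transitive var_le. Proof. by move=> x y z; apply: leq_trans. Qed.
Lemma var_le_anti : antisymmetric var_le.
Proof.
by move=> x y /andP [xy yx]; apply: (pcan_inj pickleK); apply/eqP; rewrite eqn_leq; apply/andP.
Qed.

(* The [else] branch is unreachable: [mvars m] is never empty. *)
Definition nf (m : mono) : mono :=
  if sort var_le (mvars m) is x :: l then rnormed x l else MVar 0 0.

Lemma mvars_neq0 m : mvars m != [::].
Proof. by elim: m => //= p; case: (mvars p). Qed.

Lemma mvars_rnormed x l : mvars (rnormed x l) = x :: l.
Proof. by elim: l x => [|y l IH] [i a] //=; rewrite IH. Qed.

Lemma mvars_nf m : mvars (nf m) = sort var_le (mvars m).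
Proof.
rewrite /nf; case e: (sort var_le (mvars m)) => [|x l]; last exact: mvars_rnormed.
by move/(congr1 size): e; rewrite size_sort => /eqP; rewrite size_eq0 (negbTE (mvars_neq0 m)).
Qed.

Lemma eq_nf m m' : (nf m == nf m') = perm_eq (mvars m) (mvars m').
Proof.
have sortP := perm_sortP var_le_total var_le_trans var_le_anti.
apply/eqP/idP => [e | mm']; first by apply/sortP; rewrite -!mvars_nf e.
by rewrite /nf (sortP _ _ mm').
Qed.

Lemma mdeg_mvars m : mdeg m = \sum_(x <- mvars m) x.2.
Proof. by elim: m => [i a|p IHp q IHq]; rewrite ?big_seq1 //= big_cat IHp IHq. Qed.

Lemma mdeg_nf m : mdeg (nf m) = mdeg m.
Proof. by rewrite !mdeg_mvars mvars_nf; apply: perm_big; rewrite perm_sort. Qed.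

Lemma mono_prod_mvars (F : fieldType) (t : nat * G -> F) m :
  mono_prod F (fun i a => t (i, a)) m = \prod_(x <- mvars m) t x.
Proof. by elim: m => [i a|p IHp q IHq]; rewrite ?big_seq1 //= big_cat IHp IHq. Qed.

Section NormalForm.
Context {F : fieldType}.

Definition mpropJ (m m' : mono) := propJ (tmono m : term F) (tmono m').

Lemma mpropJ_trans m1 m2 m3 : mpropJ m1 m2 -> mpropJ m2 m3 -> mpropJ m1 m3.
Proof. exact: propJ_trans. Qed.

Lemma mpropJ_mull m p q : mpropJ p q -> mpropJ (MMul m p) (MMul m q).
Proof. exact: propJ_mull. Qed.

Lemma mpropJ_mulr m p q : mpropJ p q -> mpropJ (MMul p m) (MMul q m).
Proof. exact: propJ_mulr. Qed.

Lemma mpropJ_comm m1 m2 : mpropJ (MMul m1 m2) (MMul m2 m1).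
Proof. exact: propJ_comm (homog_tmono m1) (homog_tmono m2). Qed.

Lemma mpropJ_assoc m1 m2 m3 : mpropJ (MMul (MMul m1 m2) m3) (MMul m1 (MMul m2 m3)).
Proof. exact: (propJ_assoc (homog_tmono m1) (homog_tmono m2) (homog_tmono m3)).1. Qed.

Lemma mpropJ_assocV m1 m2 m3 : mpropJ (MMul m1 (MMul m2 m3)) (MMul (MMul m1 m2) m3).
Proof. exact: (propJ_assoc (homog_tmono m1) (homog_tmono m2) (homog_tmono m3)).2. Qed.

Lemma mpropJ_rnormed_cat x l1 y l2 :
  mpropJ (MMul (rnormed x l1) (rnormed y l2)) (rnormed x (l1 ++ y :: l2)).
Proof.
elim: l1 x => [|z l1 IH] x /=; first exact: propJ_refl.
exact: mpropJ_trans (mpropJ_assoc _ _ _) (mpropJ_mull _ (IH z)).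
Qed.

Lemma mpropJ_rnormed_swap x y l : mpropJ (rnormed x (y :: l)) (rnormed y (x :: l)).
Proof.
case: l => [|z l] /=; first exact: mpropJ_comm.
apply: mpropJ_trans (mpropJ_assocV _ _ _) _.
exact: mpropJ_trans (mpropJ_mulr _ (mpropJ_comm _ _)) (mpropJ_assoc _ _ _).
Qed.

Lemma mpropJ_rnormed_move x y l1 l2 :
  mpropJ (rnormed x (l1 ++ y :: l2)) (rnormed y (x :: l1 ++ l2)).
Proof.
elim: l1 x => [|z l1 IH] x /=; first exact: mpropJ_rnormed_swap.
exact: mpropJ_trans (mpropJ_mull _ (IH z)) (mpropJ_rnormed_swap x y (z :: l1 ++ l2)).
Qed.

Lemma mpropJ_rnormed_perm x y l l' :
  perm_eq (x :: l) (y :: l') -> mpropJ (rnormed x l) (rnormed y l').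
Proof.
have [n] := ubnP (size l); elim: n x y l l' => // n IH x y l l' ln xl_yl'.
have size_l' : size l' = size l by move/perm_size: xl_yl' => [->].
have [exy | xy] := eqVneq x y.
  move: xl_yl'; rewrite -exy perm_cons => l_l'.
  case: l ln l_l' size_l' => [|z l] ln; case: l' => [|w l'] //= l_l' _.
    exact: propJ_refl.
  exact/mpropJ_mull/(IH _ _ _ _ ln l_l').
have yl : y \in l by move/perm_mem/(_ y): xl_yl'; rewrite !inE eqxx eq_sym (negbTE xy).
case/splitPr: yl ln xl_yl' size_l' => l1 l2 ln xl_yl' size_l'.
apply: mpropJ_trans (mpropJ_rnormed_move _ _ _ _) _.
case: l' xl_yl' size_l' => [|w l'] xl_yl' size_l'; first by rewrite size_cat /= addnS in size_l'.
apply: mpropJ_mull; apply: IH; last first.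
  rewrite -(perm_cons y); apply: perm_trans xl_yl'.
  by apply/permP => a /=; rewrite !count_cat /=; lia.
by move: ln; rewrite !size_cat /= addnS ltnS.
Qed.

Lemma mpropJ_rnormed_mvars {m x l} : mvars m = x :: l -> mpropJ m (rnormed x l).
Proof.
elim: m x l => [i a|p IHp q IHq] x l; first by case=> <- <-; apply: propJ_refl.
rewrite [mvars _]/=.
case ep_p: (mvars p) (mvars_neq0 p) => [//|x' lp] _.
case eq_q: (mvars q) (mvars_neq0 q) => [//|y lq] _ [<- <-].
apply: mpropJ_trans (mpropJ_mulr q (IHp _ _ ep_p)) _.
exact: mpropJ_trans (mpropJ_mull _ (IHq _ _ eq_q)) (mpropJ_rnormed_cat _ _ _ _).
Qed.

Lemma mpropJ_nf m : mpropJ m (nf m).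
Proof.
case e: (mvars m) (mvars_neq0 m) => [//|x l] _.
apply: mpropJ_trans (mpropJ_rnormed_mvars e) _.
have : perm_eq (x :: l) (sort var_le (mvars m)) by rewrite -e perm_sym perm_sort.
rewrite /nf; case: (sort _ _) => [/perm_size //|y l']; exact: mpropJ_rnormed_perm.
Qed.

End NormalForm.

(** * Completeness *)

Section Completeness.
Variables (F : fieldType) (T : twisted_alg F) (gr : G -> ta_grade T).
Hypothesis F_infinite : forall s : seq F, exists x : F, x \notin s.
Hypothesis gr_add : forall a b, ta_gadd T (gr a) (gr b) = gr (a + b).
Hypothesis gr_inj : injective gr.
Hypothesis gens_identity : forall f, oct_gens f -> ta_identity T gr f.

Local Notation J := (TGen (@oct_gens F)).
Local Notation J_closed := (TGen_closed (@oct_gens F)).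
Local Notation emb := (ta_emb T).
Local Notation msigma := (mono_sigma T gr).

Lemma TGen_identity f : J f -> ta_identity T gr f.
Proof. by move=> Jf; apply: Jf; [exact: ta_identity_tclosed | apply: gens_identity]. Qed.

Definition nf_scalar (m : mono) : F := msigma m / msigma (nf m).

(* The scalar is pinned down by evaluating at the basis elements [x_(i,a) = e_a]. *)
Lemma TGen_nf m : J (TAdd (tmono m) (TScale (- nf_scalar m) (tmono (nf m)))).
Proof.
have [l Jl] := @mpropJ_nf F m.
have := TGen_identity Jl (fun i a => emb (gr a) 1) (fun i a => ta_hom_emb T (gr a) 1).
have one_prod m' : mono_prod F (fun _ _ => 1) m' = 1.
  by elim: m' => //= p -> q ->; rewrite mulr1.
rewrite /= !(ta_eval_tmono _ _ gr_add (fun _ _ => 1)) mdeg_nf ta_scaleE -ta_embD.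
rewrite -(ta_emb0 T (gr (mdeg m))) => /ta_emb_inj.
rewrite !one_prod !mulr1 => /eqP; rewrite addr_eq0 => /eqP sigma_m.
suff -> : - nf_scalar m = l by [].
by rewrite /nf_scalar sigma_m mulNr mulfK ?mono_sigma_neq0 ?opprK.
Qed.

Lemma coef_expand (f : term F) n :
  coef f n = \sum_(m <- undup (supp f)) coef f m * (m == n)%:R.
Proof.
rewrite (@sum_uniq_support _ _ _ [:: n]) ?undup_uniq // ?big_seq1 ?eqxx ?mulr1 // => m.
have [<- | ] := eqVneq m n; last by rewrite mulr0 eqxx.
by rewrite mulr1 => /supp_coef; rewrite mem_undup mem_seq1 eqxx => ->.
Qed.

Definition nf_poly (f : term F) : term F :=
  tsum [seq TScale (coef f m * nf_scalar m) (tmono (nf m)) | m <- undup (supp f)].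

Lemma TGen_sub_nf_poly f : J (TAdd f (TScale (-1) (nf_poly f))).
Proof.
pose h := tsum [seq TScale (coef f m) (TAdd (tmono m) (TScale (- nf_scalar m) (tmono (nf m))))
               | m <- undup (supp f)].
have Jh : J h by apply: (tclosed_tsum J_closed) => m; apply: (tclosedZ J_closed); apply: TGen_nf.
apply: (tclosed_peq J_closed _ Jh) => n.
rewrite /= !coef_tsum !big_map (coef_expand f n) mulr_sumr -big_split /=.
apply: eq_bigr => m _ /=; rewrite !coef_tmono; ring.
Qed.

Lemma nf_comb_identity {S : seq mono} {c : mono -> F} :
  ta_identity T gr (tsum [seq TScale (c m) (tmono (nf m)) | m <- S]) ->
  forall m0, \sum_(m <- S | nf m == nf m0) c m = 0.
Proof.
move=> comb_id m0; pose d := mdeg (nf m0).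
pose I := [seq ((d == mdeg (nf m))%:R * c m * msigma (nf m), mvars (nf m)) | m <- S].
have I0 t : msum_fun I t = 0.
  have := comb_id (fun i a => emb (gr a) (t (i, a))) (fun i a => ta_hom_emb T (gr a) _).
  move/(congr1 (ta_proj T (gr d))); rewrite ta_proj0 ta_eval_tsum big_map ta_proj_sum => <-.
  rewrite /msum_fun big_map; apply: eq_bigr => m _ /=.
  rewrite ta_eval_tmono // ta_scaleE ta_projE (inj_eq gr_inj) mono_prod_mvars.
  by case: (d == _); rewrite ?mul1r ?mul0r // mulrA.
have := monomial_sum_eq0 F_infinite I0 (mvars (nf m0)).
rewrite big_map (eq_bigl (fun m => nf m == nf m0)) => [|m]; last first.
  by rewrite !mvars_nf perm_sort perm_sym perm_sort perm_sym eq_nf.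
rewrite big_mkcond /= (eq_bigr (fun m => msigma (nf m0) * (if nf m == nf m0 then c m else 0))).
  rewrite -mulr_sumr -big_mkcond => /eqP.
  by rewrite mulf_eq0 (negbTE (mono_sigma_neq0 _ _ _)) => /eqP.
by move=> m _; case: eqP => [-> | _]; rewrite ?mulr0 // eqxx mul1r mulrC.
Qed.

Lemma identity_TGen f : ta_identity T gr f -> J f.
Proof.
move=> f_id; have Jfg := TGen_sub_nf_poly f.
have g_id : ta_identity T gr (nf_poly f).
  move=> v v_hom; have := TGen_identity Jfg v v_hom.
  by rewrite /= (f_id v v_hom) add0r ta_scaleN1 => /eqP; rewrite oppr_eq0 => /eqP.
have g0 : peq TZero (nf_poly f).
  move=> n; rewrite /= coef_tsum big_map.
  rewrite (eq_bigr (fun m => if nf m == n then coef f m * nf_scalar m else 0)); last first.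
    by move=> m _; rewrite /= coef_tmono; case: eqP; rewrite ?mulr1 ?mulr0.
  rewrite -big_mkcond /=.
  have [/hasP [m0 _ /eqP <-] | /hasPn no_n] := boolP (has (fun m => nf m == n) (undup (supp f))).
    by rewrite (nf_comb_identity g_id).
  by rewrite big_seq_cond big1 // => m /andP [/no_n /negbTE ->].
have Jg := tclosed_peq J_closed g0 (tclosed0 J_closed).
apply: (tclosed_peq J_closed _ (tclosedD J_closed Jfg Jg)).
by move=> n /=; rewrite mulN1r addrNK.
Qed.

End Completeness.

Theorem mainTheorem1 (F : fieldType)
  (F_infinite : forall s : seq F, exists x : F, x \notin s)
  (F_char : (2%:R : F) != 0)
  (al be ga : F) (hal : al != 0) (hbe : be != 0) (hga : ga != 0) :
  forall f : term F, graded_identity_O al be ga f <-> TGen (@oct_gens F) f.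
Proof.
move=> f; have gr_add := oct_grade_add F al be ga hal hbe hga.
have gens_id := @oct_gens_identity F al be ga hal hbe hga.
apply: iff_trans (graded_identity_OE F al be ga hal hbe hga f) _; split.
  exact: (identity_TGen F_infinite gr_add oct_grade_inj gens_id).
by move=> Jf; apply: Jf; [exact: ta_identity_tclosed gr_add | exact: gens_id].
Qed.
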